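(* Let $G$ be a grid-labelled graph of type $(a,b)$ with at least one edge. If $\rho(G)$ is separable, then $D(G)=D(\Gamma(G))$, i.e. every vertex has the same degree in $G$ and in $\Gamma(G)$.
   Context: A grid-labelled graph of type $(a,b)$ is a simple graph $G$ whose vertex set is the grid $[a]\times[b]$; $D(G)$ denotes its (diagonal) degree matrix and $L(G)=D(G)-A(G)$ its combinatorial Laplacian. If $G$ has $m\ge1$ edges, $\rho(G)=L(G)/(2m)$, viewed as a density matrix on $\mathbb{C}^a\otimes\mathbb{C}^b$ with vertex $(i,j)$ corresponding to $|i\rangle\otimes|j\rangle$. Separable means a convex combination of tensor products of density matrices. The partial transpose of $G$ is the grid-labelled graph $\Gamma(G)$ of type $(a,b)$ with edge set $\{\{(k,j),(i,l)\}:\{(i,j),(k,l)\}\in E(G)\}$ (horizontal and vertical edges are unchanged; each diagonal edge is replaced by its ''transposed'' edge). *)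

From HB Require Import structures.
From mathcomp Require Import all_boot all_order all_algebra all_field.
Set Implicit Arguments. Unset Strict Implicit. Unset Printing Implicit Defensive.
Import Order.TTheory GRing.Theory Num.Theory.
Local Open Scope ring_scope.

Section Grid.
Variables a b : nat.

Definition vtx := ('I_a * 'I_b)%type.

(* basis index of |i> (x) |j> in C^a (x) C^b = C^(a*b) *)
Definition idx (x : vtx) : 'I_(a * b) := mxvec_index x.1 x.2.

Definition simple_graph (e : rel vtx) : Prop := symmetric e /\ irreflexive e.

Definition edges (e : rel vtx) : {set {set vtx}} :=
  [set [set p.1; p.2] | p in [set p : vtx * vtx | e p.1 p.2]].

Definition nedges (e : rel vtx) : nat := #|edges e|.

Definition deg (e : rel vtx) (x : vtx) : nat := #|[set y | e x y]|.

Definition Dmx (e : rel vtx) : 'M[algC]_(a * b) :=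
  \sum_(x : vtx) (deg e x)%:R *: delta_mx (idx x) (idx x).

Definition Amx (e : rel vtx) : 'M[algC]_(a * b) :=
  \sum_(x : vtx) \sum_(y : vtx) (e x y)%:R *: delta_mx (idx x) (idx y).

Definition Lmx (e : rel vtx) : 'M[algC]_(a * b) := Dmx e - Amx e.

Definition rho (e : rel vtx) : 'M[algC]_(a * b) :=
  ((2 * nedges e)%:R)^-1 *: Lmx e.

Definition Gamma (e : rel vtx) : rel vtx :=
  fun x y => e (y.1, x.2) (x.1, y.2).

End Grid.

Definition kron (a b : nat) (A : 'M[algC]_a) (B : 'M[algC]_b) : 'M[algC]_(a * b) :=
  \sum_(i : 'I_a) \sum_(k : 'I_a) \sum_(j : 'I_b) \sum_(l : 'I_b)
     (A i k * B j l) *: delta_mx (mxvec_index i j) (mxvec_index k l).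

Definition adjmx (m n : nat) (A : 'M[algC]_(m, n)) : 'M[algC]_(n, m) :=
  (map_mx Num.conj A)^T.

Definition density (n : nat) (A : 'M[algC]_n) : Prop :=
  [/\ adjmx A = A,
      (forall v : 'cV[algC]_n, 0 <= (adjmx v *m A *m v) 0 0)
    & \tr A = 1].

Definition separable_state (a b : nat) (R : 'M[algC]_(a * b)) : Prop :=
  exists (N : nat) (p : 'I_N -> algC) (A : 'I_N -> 'M[algC]_a) (B : 'I_N -> 'M[algC]_b),
    [/\ forall t, 0 <= p t,
        \sum_(t < N) p t = 1,
        forall t, density (A t),
        forall t, density (B t)
      & R = \sum_(t < N) p t *: kron (A t) (B t)].

From HB Require Import structures.
From mathcomp Require Import all_boot all_order all_algebra all_field.
From mathcomp Require Import sesquilinear spectral ring.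
Set Implicit Arguments. Unset Strict Implicit. Unset Printing Implicit Defensive.
Import Order.TTheory GRing.Theory Num.Theory.
Local Open Scope ring_scope.

(* Separability forces the partial transpose rho^Gamma to be positive
   semidefinite (the Peres criterion): it is a convex combination of
   A (x) B^T with A, B positive semidefinite.  Entrywise,
   rho^Gamma = (D(G) - A(Gamma G)) / 2m, a real symmetric matrix whose entries
   add up to zero, because Gamma permutes the ordered edges.  For a positive
   semidefinite matrix M with zero total sum the all-ones vector satisfies
   1^* M 1 = 0, hence M 1 = 0: every row sum vanishes, and the row sum of
   D(G) - A(Gamma G) at a vertex is its degree in G minus its degree in
   Gamma G. *)

Definition qform (I : finType) (M : I -> I -> algC) (v : I -> algC) : algC :=
  \sum_x \sum_y (v x)^* * M x y * v y.

Lemma sum_delta_mull (I : finType) (i0 : I) (F : I -> algC) :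
  \sum_i (i0 == i)%:R * F i = F i0.
Proof.
rewrite (bigD1 i0) //= eqxx mul1r big1 ?addr0 // => i.
by rewrite eq_sym => /negPf ->; rewrite mul0r.
Qed.

Lemma sum_pair a b (F : 'I_a * 'I_b -> algC) : \sum_x F x = \sum_i \sum_j F (i, j).
Proof. by rewrite pair_big; apply: eq_bigr => -[i j]. Qed.

Lemma qform_sum (I : finType) (N : nat) (p : 'I_N -> algC) (M : I -> I -> algC)
    (Ms : 'I_N -> I -> I -> algC) (v : I -> algC) :
  (forall x y, M x y = \sum_t p t * Ms t x y) ->
  qform M v = \sum_t p t * qform (Ms t) v.
Proof.
move=> ME; rewrite /qform; under eq_bigr => x _ do under eq_bigr => y _ do rewrite ME.
under [RHS]eq_bigr => t _ do rewrite mulr_sumr.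
rewrite [RHS]exchange_big; apply: eq_bigr => x _.
under [RHS]eq_bigr => t _ do rewrite mulr_sumr.
rewrite [RHS]exchange_big; apply: eq_bigr => y _.
by rewrite mulr_sumr mulr_suml; apply: eq_bigr => t _; ring.
Qed.

Lemma qform_density_ge0 n (A : 'M[algC]_n) (v : 'I_n -> algC) :
  density A -> 0 <= qform A v.
Proof.
case=> _ Apsd _; have := Apsd (\col_i v i).
suff -> : (adjmx (\col_i v i) *m A *m \col_i v i) 0 0 = qform A v by [].
rewrite !mxE /qform exchange_big; apply: eq_bigr => k _; rewrite !mxE mulr_suml.
by apply: eq_bigr => i _; rewrite !mxE.
Qed.

Section Spectral.
Local Open Scope sesquilinear_scope.

Lemma density_spectral_decomp n (B : 'M[algC]_n) : density B ->
  exists (P : 'M[algC]_n) (d : 'I_n -> algC), (forall k, 0 <= d k) /\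
   forall j l, B j l = \sum_k (P k j)^* * d k * P k l.
Proof.
case=> Bh Bpsd _.
have Bherm : B \is hermsymmx.
  by apply/is_hermitianmxP; rewrite expr0 scale1r -{1}Bh /adjmx map_trmx.
have /orthomx_spectralP BE := hermitian_normalmx Bherm.
set P := spectralmx B in BE; set d := spectral_diag B in BE.
have Pu : P \is unitarymx by exact: spectral_unitarymx.
rewrite invmx_unitary // in BE.
have PPt := unitarymxP Pu.
exists P, (fun k => d 0 k); split=> [k|j l]; last first.
  rewrite BE !mxE; apply: eq_bigr => k _; rewrite !mxE.
  rewrite (bigD1 k) //= big1 ?addr0 => [|k' /negPf nk']; last by rewrite !mxE nk' mulr0.
  by rewrite !mxE eqxx.
pose r : 'rV[algC]_n := delta_mx 0 k *m P.
have := Bpsd (adjmx r).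
have -> : adjmx (adjmx r) = r by apply/matrixP=> i i'; rewrite !mxE conjCK.
have -> : adjmx r = r^t* by rewrite /adjmx map_trmx.
rewrite /r BE !mulmxA -(mulmxA 'e_k P) PPt mulmx1.
rewrite trmx_mul map_mxM !mulmxA -(mulmxA _ P (P^t*)) PPt mulmx1.
rewrite -rowE row_diag_mx -scalemxAl.
have -> : ('e_k)^t* = delta_mx k (0 : 'I_1) :> 'M[algC]_(n, 1).
  by apply/matrixP=> i i'; rewrite !mxE conjC_nat andbC.
by rewrite mul_delta_mx !mxE !eqxx mulr1.
Qed.

End Spectral.

(* Writing B = P^* diag(d) P turns the form into a d-weighted sum of forms of A. *)
Lemma qform_partial_transpose_kron_ge0 a b (A : 'M[algC]_a) (B : 'M[algC]_b)
    (v : 'I_a * 'I_b -> algC) :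
  density A -> density B -> 0 <= qform (fun x y => A x.1 y.1 * B y.2 x.2) v.
Proof.
move=> dA /density_spectral_decomp [P [d [d_ge0 BE]]].
pose u r i := \sum_j v (i, j) * (P r j)^*.
suff -> : qform (fun x y => A x.1 y.1 * B y.2 x.2) v = \sum_r d r * qform A (u r).
  by apply: sumr_ge0 => r _; rewrite mulr_ge0 ?qform_density_ge0.
transitivity (\sum_i \sum_k A i k * \sum_r d r * ((u r i)^* * u r k)).
  rewrite /qform sum_pair; apply: eq_bigr => i _.
  under eq_bigr => j _ do rewrite sum_pair.
  rewrite exchange_big; apply: eq_bigr => k _.
  transitivity (A i k * \sum_j \sum_l \sum_r d r *
      (((v (i, j))^* * P r j) * (v (k, l) * (P r l)^*))).
    rewrite mulr_sumr; apply: eq_bigr => j _; rewrite mulr_sumr.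
    apply: eq_bigr => l _; rewrite BE !mulr_sumr mulr_suml; apply: eq_bigr => r _ /=.
    ring.
  congr (_ * _); under eq_bigr => j _ do rewrite exchange_big.
  rewrite exchange_big; apply: eq_bigr => r _.
  rewrite /u rmorph_sum big_distrlr mulr_sumr; apply: eq_bigr => j _.
  by rewrite mulr_sumr; apply: eq_bigr => l _ /=; rewrite rmorphM /= conjCK.
rewrite /qform; symmetry; under eq_bigr => r _ do rewrite mulr_sumr.
rewrite exchange_big; apply: eq_bigr => i _.
under eq_bigr => r _ do rewrite mulr_sumr.
rewrite exchange_big; apply: eq_bigr => k _.
by rewrite mulr_sumr; apply: eq_bigr => r _; ring.
Qed.

Lemma mxvec_index_inj m n : injective (uncurry (@mxvec_index m n)).
Proof.
by case: (curry_mxvec_bij m n) => g fK _; apply: (can_inj (g := g)) => x; apply: fK.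
Qed.

Lemma mxvec_index_eq m n (i k : 'I_m) (j l : 'I_n) :
  (mxvec_index i j == mxvec_index k l) = (i == k) && (j == l).
Proof. by rewrite -xpair_eqE -(inj_eq (@mxvec_index_inj m n)). Qed.

Lemma kronE a b (A : 'M[algC]_a) (B : 'M[algC]_b) i j k l :
  kron A B (mxvec_index i j) (mxvec_index k l) = A i k * B j l.
Proof.
rewrite /kron summxE.
transitivity (\sum_i0 (i == i0)%:R * \sum_k0 (k == k0)%:R * \sum_j0 (j == j0)%:R *
              \sum_l0 (l == l0)%:R * (A i0 k0 * B j0 l0)); last by rewrite !sum_delta_mull.
apply: eq_bigr => i0 _; rewrite summxE mulr_sumr; apply: eq_bigr => k0 _.
rewrite summxE !mulr_sumr; apply: eq_bigr => j0 _.
rewrite summxE !mulr_sumr; apply: eq_bigr => l0 _.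
rewrite !mxE !mxvec_index_eq.
by case: (i == i0); case: (k == k0); case: (j == j0); case: (l == l0);
  rewrite /= ?mulr1 ?mulr0 ?mul1r ?mul0r.
Qed.

Definition partial_transpose a b (R : 'M[algC]_(a * b)) (x y : vtx a b) : algC :=
  R (idx (x.1, y.2)) (idx (y.1, x.2)).

Lemma separable_qform_partial_transpose_ge0 a b (R : 'M[algC]_(a * b))
    (v : vtx a b -> algC) :
  separable_state R -> 0 <= qform (partial_transpose R) v.
Proof.
case=> N [p [A [B [p_ge0 _ dA dB ->]]]].
rewrite (qform_sum (p := p) (Ms := fun t x y => A t x.1 y.1 * B t y.2 x.2)) => [|x y].
  by apply: sumr_ge0 => t _; rewrite mulr_ge0 ?p_ge0 ?qform_partial_transpose_kron_ge0.
by rewrite /partial_transpose summxE; apply: eq_bigr => t _; rewrite mxE kronE.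
Qed.

Section PsdRowSums.
Variables (I : finType) (M : I -> I -> algC).
Hypothesis M_sym : forall x y, M x y = M y x.

Lemma qform_const_add_delta (z : I) (al be : algC) :
  al \is Num.real -> be \is Num.real ->
  qform M (fun x => al + be * (x == z)%:R) =
  al ^+ 2 * \sum_x \sum_y M x y + 2 * al * be * \sum_y M z y + be ^+ 2 * M z z.
Proof.
move=> al_real be_real.
have sum_shift (F : I -> algC) :
    \sum_x (al + be * (x == z)%:R) * F x = al * \sum_x F x + be * F z.
  rewrite mulr_sumr -(sum_delta_mull z (fun x => be * F x)) -big_split /=.
  by apply: eq_bigr => x _; rewrite eq_sym; ring.
have col_sum : \sum_x M x z = \sum_y M z y by apply: eq_bigr => x _; rewrite M_sym.
have row_form x : \sum_y (al + be * (x == z)%:R)^* * M x y * (al + be * (y == z)%:R) =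
    (al + be * (x == z)%:R) * (al * \sum_y M x y + be * M x z).
  rewrite conj_Creal ?rpredD ?rpredM ?realn // -(sum_shift (M x)) mulr_sumr.
  by apply: eq_bigr => y _; ring.
rewrite /qform (eq_bigr _ (fun x _ => row_form x)) sum_shift big_split /=.
by rewrite -!mulr_sumr col_sum; ring.
Qed.

Hypotheses (M_real : forall x y, M x y \is Num.real)
           (M_psd : forall v, 0 <= qform M v)
           (M_sum0 : \sum_x \sum_y M x y = 0).

(* With r the z-th row sum and m = M z z >= 0, the test vector
   (m + 1) 1 - r e_z has form -r^2 (m + 2). *)
Lemma psd_rowsum_eq0 (z : I) : \sum_y M z y = 0.
Proof.
set r := \sum_y M z y; set m := M z z.
have r_real : r \is Num.real by rewrite rpred_sum.
have m_ge0 : 0 <= m.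
  have := M_psd (fun x => 0 + 1 * (x == z)%:R).
  by rewrite qform_const_add_delta ?real0 ?real1 // M_sum0 expr1n mul1r !(mulr0, mul0r, add0r).
have := M_psd (fun x => (m + 1) + (- r) * (x == z)%:R).
rewrite qform_const_add_delta ?rpredN ?rpredD ?real1 ?(ger0_real m_ge0) // M_sum0 -/r -/m.
have -> : (m + 1) ^+ 2 * 0 + 2 * (m + 1) * - r * r + (- r) ^+ 2 * m =
          - (r ^+ 2 * (m + 2)) by ring.
rewrite oppr_ge0 => le0.
have : r ^+ 2 * (m + 2) == 0.
  by rewrite eq_le le0 mulr_ge0 ?addr_ge0 // -real_normK // exprn_ge0.
by rewrite mulf_eq0 sqrf_eq0 orbC gt_eqF ?ltr_wpDl //= => /eqP.
Qed.

End PsdRowSums.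

Section GridGraph.
Variables a b : nat.

Lemma idx_eq (x y : vtx a b) : (idx x == idx y) = (x == y).
Proof. by case: x => i j; case: y => k l; rewrite /idx /= mxvec_index_eq. Qed.

Lemma deg_sum (f : rel (vtx a b)) (x : vtx a b) : (deg f x)%:R = \sum_y (f x y)%:R :> algC.
Proof.
rewrite /deg -sum1_card natr_sum big_mkcond /=; apply: eq_bigr => y _.
by rewrite inE; case: (f x y).
Qed.

Variable e : rel (vtx a b).

(* Gamma acts on ordered pairs of vertices by an involution. *)
Lemma sum_deg_Gamma : \sum_x (deg (Gamma e) x)%:R = \sum_x (deg e x)%:R :> algC.
Proof.
under eq_bigr => x _ do rewrite deg_sum.
under [RHS]eq_bigr => x _ do rewrite deg_sum.
pose f (p : vtx a b * vtx a b) := ((p.2.1, p.1.2), (p.1.1, p.2.2)).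
have f_invol : involutive f by case=> -[i j] [k l].
rewrite !pair_big (reindex_inj (inv_inj f_invol)) /=.
by apply: eq_bigr => -[[i j] [k l]].
Qed.

Lemma rho_idxE (x y : vtx a b) :
  rho e (idx x) (idx y) =
  ((2 * nedges e)%:R)^-1 * ((deg e x)%:R * (x == y)%:R - (e x y)%:R).
Proof.
rewrite /rho /Lmx !mxE /Dmx /Amx !summxE; congr (_ * (_ - _)).
  rewrite -(sum_delta_mull x (fun x0 => (deg e x0)%:R * (x0 == y)%:R)).
  apply: eq_bigr => x0 _; rewrite !mxE !idx_eq [x0 == y]eq_sym.
  by case: (x == x0); case: (y == x0); rewrite /= ?mulr1 ?mulr0 ?mul1r ?mul0r.
transitivity (\sum_x0 (x == x0)%:R * \sum_y0 (y == y0)%:R * (e x0 y0)%:R : algC);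
  last by rewrite !sum_delta_mull.
apply: eq_bigr => x0 _.
rewrite summxE mulr_sumr; apply: eq_bigr => y0 _; rewrite !mxE !idx_eq.
by case: (x == x0); case: (y == y0); rewrite /= ?mulr1 ?mulr0 ?mul1r ?mul0r.
Qed.

Hypothesis e_sym : symmetric e.

Lemma Gamma_sym : symmetric (Gamma e).
Proof. by move=> x y; rewrite /Gamma e_sym. Qed.

Lemma partial_transpose_rhoE (x y : vtx a b) :
  partial_transpose (rho e) x y =
  ((2 * nedges e)%:R)^-1 * ((deg e x)%:R * (x == y)%:R - (Gamma e x y)%:R).
Proof.
rewrite /partial_transpose rho_idxE /Gamma e_sym.
have -> : ((x.1, y.2) == (y.1, x.2)) = (x == y).
  by case: x => i j; case: y => k l; rewrite !xpair_eqE /= [l == j]eq_sym.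
by case: eqP => [->|]; rewrite ?mulr0 //; case: y.
Qed.

Lemma partial_transpose_rho_rowsum (x : vtx a b) :
  \sum_y partial_transpose (rho e) x y =
  ((2 * nedges e)%:R)^-1 * ((deg e x)%:R - (deg (Gamma e) x)%:R).
Proof.
under eq_bigr => y _ do rewrite partial_transpose_rhoE.
rewrite -mulr_sumr sumrB; congr (_ * (_ - _)); last by rewrite deg_sum.
by under eq_bigr => y _ do rewrite mulrC; rewrite sum_delta_mull.
Qed.

End GridGraph.

Theorem mainTheorem4 (a b : nat) (e : rel (vtx a b)) :
  simple_graph e -> (0 < nedges e)%N -> separable_state (rho e) ->
  Dmx e = Dmx (Gamma e).
Proof.
move=> [e_sym _] m_gt0 sep.
have c_neq0 : ((2 * nedges e)%:R)^-1 != 0 :> algC.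
  by rewrite invr_eq0 pnatr_eq0 muln_eq0 negb_or /= -lt0n.
have rowsum0 := psd_rowsum_eq0 (M := partial_transpose (rho e)).
rewrite /Dmx; apply: eq_bigr => z _; congr (_ *: _); apply/eqP.
rewrite -subr_eq0 -(mulrI_eq0 _ (lregP c_neq0)) -partial_transpose_rho_rowsum //.
apply/eqP/rowsum0 => [x y|x y|v|].
- by rewrite !partial_transpose_rhoE // Gamma_sym // [y == x]eq_sym;
    case: eqP => [->|]; rewrite ?mulr0.
- rewrite partial_transpose_rhoE //.
  by apply: rpredM; [rewrite realV | apply: rpredB; [apply: rpredM|]]; apply: realn.
- exact: separable_qform_partial_transpose_ge0.
- under eq_bigr => x _ do rewrite partial_transpose_rho_rowsum //.
  by rewrite -mulr_sumr sumrB sum_deg_Gamma subrr mulr0.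
Qed.
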